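(* Let $G$ be a twin-free simple graph on vertex set $\{1,\dots,n\}$, and suppose that for some $1\le m\le n$ the set $M=\{1,2,\dots,m\}$ is an identifying code of $G$. Then the lexicographic algorithm (Algorithm 1) applied to $G$ returns an identifying code $C$ with $C\subseteq M$.
   Context: Vertices of $G$ are identified with the integers $1,\dots,n$ and ordered by the usual order. For a vertex $v$, $N(v)=\{v\}\cup\{w : vw\in E(G)\}$ is its closed neighbourhood. A set $C\subseteq V(G)$ is an identifying code if the sets $N(v)\cap C$, $v\in V(G)$, are all nonempty and pairwise distinct. $G$ is twin-free if $N(v)\neq N(w)$ for all distinct vertices $v,w$. The lexicographic algorithm (Algorithm 1): set $C_0=\emptyset$. For $j=1,2,\dots,n$ in turn: (i) if $N(j)\cap C_{j-1}=\emptyset$, set $C_j=C_{j-1}\cup\{\min N(j)\}$; (ii) otherwise, if there exists $k\in\{1,\dots,j-1\}$ with $N(k)\cap C_{j-1}=N(j)\cap C_{j-1}$, let $k$ be the least such index; if $N(j)\neq N(k)$ set $C_j=C_{j-1}\cup\{\min(N(j)\triangle N(k))\}$, while if $N(j)=N(k)$ the algorithm stops immediately and returns ''failure''; (iii) otherwise set $C_j=C_{j-1}$. If the algorithm never fails, it returns $C_n$. Here $\triangle$ denotes symmetric difference. *)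

From mathcomp Require Import all_boot.
Set Implicit Arguments. Unset Strict Implicit. Unset Printing Implicit Defensive.

(* A simple graph on the vertex set 'I_n (vertex i : 'I_n stands for i+1 in
   the paper; the order is the usual order of naturals, so it is preserved). *)
Definition simple_graph (n : nat) (e : rel 'I_n) : Prop :=
  symmetric e /\ irreflexive e.

Definition cnbhd n (e : rel 'I_n) (v : 'I_n) : {set 'I_n} :=
  [set w | (w == v) || e v w].

Definition twin_free n (e : rel 'I_n) : Prop :=
  forall v w : 'I_n, v <> w -> cnbhd e v <> cnbhd e w.

Definition identifying_code n (e : rel 'I_n) (C : {set 'I_n}) : Prop :=
  (forall v : 'I_n, cnbhd e v :&: C != set0) /\
  (forall v w : 'I_n, v <> w -> cnbhd e v :&: C <> cnbhd e w :&: C).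

Definition setmin n (A : {set 'I_n}) : option 'I_n :=
  [pick i in A | [forall j in A, (i <= j)%N]].

Definition add_min n (C A : {set 'I_n}) : option {set 'I_n} :=
  omap (fun x => x |: C) (setmin A).

(* Step j of Algorithm 1, given C_{j-1}; None = "failure". *)
Definition lex_step n (e : rel 'I_n) (C : {set 'I_n}) (j : 'I_n)
  : option {set 'I_n} :=
  if cnbhd e j :&: C == set0 then add_min C (cnbhd e j)
  else match [pick k : 'I_n | ((k < j)%N && (cnbhd e k :&: C == cnbhd e j :&: C))
                               & [forall k' : 'I_n,
                                   ((k' < j)%N && (cnbhd e k' :&: C == cnbhd e j :&: C))
                                   ==> (k <= k')%N]] with
       | Some k =>
           if cnbhd e j != cnbhd e k
           then add_min C ((cnbhd e j :\: cnbhd e k) :|: (cnbhd e k :\: cnbhd e j))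
           else None
       | None => Some C
       end.

Definition lex_algorithm n (e : rel 'I_n) : option {set 'I_n} :=
  foldl (fun oC j => if oC is Some C then lex_step e C j else None)
        (Some set0) (enum 'I_n).

From mathcomp Require Import all_boot.

Set Implicit Arguments.
Unset Strict Implicit.
Unset Printing Implicit Defensive.

(* We show by induction on i that after processing the vertices
   0, ..., i-1 the algorithm has not failed and its current set C satisfies
   the invariant [lex_inv i C]:  C is contained in M, every v < i has a
   nonempty trace N(v) :&: C, and the traces of distinct v, w < i differ.
   For i = n this says that the output is an identifying code inside M.  The vertices it adds are least elements of N(j), resp. of
   N(j) (+) N(k); since M dominates j (resp. separates j from k) and M is
   an initial segment, these least elements lie in M.
   The step never fails, because failure would need twins. *)

Section SetFacts.
Variable n : nat.
Implicit Types A B C D : {set 'I_n}.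

Lemma setmin_lt (m : nat) A :
  A :&: [set i : 'I_n | (i < m)%N] != set0 ->
  exists x, setmin A = Some x /\ x \in A /\ (x < m)%N.
Proof.
case/set0Pn=> y; rewrite !inE => /andP[yA ym].
rewrite /setmin; case: pickP => [x /andP[xA /forallP xmin] | nomin].
  by exists x; do !split=> //; exact: leq_ltn_trans (implyP (xmin y) yA) ym.
have [x xA minx] := @arg_minnP _ y (fun i : 'I_n => i \in A) val yA.
move: (nomin x); rewrite xA /= => /negP; case.
by apply/forallP=> z; apply/implyP; apply: minx.
Qed.

Lemma trace_neq_mono A B C D : C \subset D ->
  A :&: C <> B :&: C -> A :&: D <> B :&: D.
Proof.
move=> sCD neAB eqAB; apply: neAB; apply/setP=> x; move/setP: eqAB => /(_ x).
rewrite !inE; case xC: (x \in C); last by rewrite !andbF.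
by rewrite (subsetP sCD x xC) !andbT.
Qed.

Lemma trace_nonempty_mono A C D : C \subset D ->
  A :&: C != set0 -> A :&: D != set0.
Proof.
move=> sCD /set0Pn[x]; rewrite inE => /andP[xA xC].
by apply/set0Pn; exists x; rewrite inE xA (subsetP sCD x xC).
Qed.

Lemma symdiff_meets A B C : A :&: C <> B :&: C ->
  ((A :\: B) :|: (B :\: A)) :&: C != set0.
Proof.
move=> neAB; apply/negP=> /eqP sym0; apply: neAB; apply/setP=> x.
move/setP: sym0 => /(_ x); rewrite !inE.
by case: (x \in A); case: (x \in B); case: (x \in C).
Qed.

Lemma symdiff_separates A B C x : x \in (A :\: B) :|: (B :\: A) ->
  A :&: (x |: C) <> B :&: (x |: C).
Proof.
move=> xAB /setP /(_ x); move: xAB; rewrite !inE eqxx /= !andbT.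
by case: (x \in A); case: (x \in B).
Qed.

End SetFacts.

Lemma ltnS_ord_case n (v j : 'I_n) : (v < j.+1)%N -> v = j \/ (v < j)%N.
Proof.
by rewrite ltnS leq_eqVlt => /orP[/eqP/val_inj|]; [left | right].
Qed.

Section LexAlgorithm.
Variables (n : nat) (e : rel 'I_n) (m : nat).
Hypothesis twinfree : twin_free e.
Let M : {set 'I_n} := [set i : 'I_n | (i < m)%N].
Hypothesis codeM : identifying_code e M.

Definition lex_inv (i : nat) (C : {set 'I_n}) : Prop :=
  C \subset M /\
  (forall v : 'I_n, (v < i)%N -> cnbhd e v :&: C != set0) /\
  (forall v w : 'I_n, (v < i)%N -> (w < i)%N -> v <> w ->
     cnbhd e v :&: C <> cnbhd e w :&: C).

Lemma lex_inv_extend (j : 'I_n) (C C' : {set 'I_n}) :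
  lex_inv j C -> C \subset C' -> C' \subset M ->
  cnbhd e j :&: C' != set0 ->
  (forall v : 'I_n, (v < j)%N -> cnbhd e v :&: C' <> cnbhd e j :&: C') ->
  lex_inv j.+1 C'.
Proof.
move=> [_ [dom sep]] sCC' sC'M domj sepj; split=> //; split.
  move=> v /ltnS_ord_case[->//|vj]; exact: trace_nonempty_mono sCC' (dom v vj).
move=> v w /ltnS_ord_case[->|vj] /ltnS_ord_case[->|wj] vw //.
- by move=> eqjw; apply: (sepj w wj); rewrite eqjw.
- exact: sepj.
- exact: trace_neq_mono sCC' (sep v w vj wj vw).
Qed.

Lemma setU1_in_M (x : 'I_n) (C : {set 'I_n}) :
  (x < m)%N -> C \subset M -> x |: C \subset M.
Proof. by move=> xm sCM; rewrite subUset sub1set inE xm sCM. Qed.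

Lemma lex_step_inv (j : 'I_n) (C : {set 'I_n}) :
  lex_inv j C -> exists C', lex_step e C j = Some C' /\ lex_inv j.+1 C'.
Proof.
move=> inv; have [sCM [dom sep]] := inv; have [domM sepM] := codeM.
rewrite /lex_step; case: ifP => [/eqP trj0 | /negbT trj].
  (* case (i): N(j) misses C; its least element lies in M *)
  have [x [minj [xj xm]]] := setmin_lt (domM j).
  rewrite /add_min minj; exists (x |: C); split=> //.
  apply: lex_inv_extend inv (subsetU1 x C) (setU1_in_M xm sCM) _ _.
    by apply/set0Pn; exists x; rewrite in_setI in_setU1 eqxx xj.
  move=> v vj; apply: trace_neq_mono (subsetU1 x C) _; rewrite trj0 => trv0.
  by move: (dom v vj); rewrite trv0 eqxx.
case: pickP => [k /andP[/andP[kj /eqP trkj] _] | nok].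
  (* case (ii): k < j has the same trace as j; they are not twins *)
  have jk : j <> k by move=> eqjk; move: kj; rewrite eqjk ltnn.
  case: ifP => [_ | /negbFE /eqP twin]; last by case: (twinfree jk).
  have [x [minjk [xjk xm]]] := setmin_lt (symdiff_meets (sepM j k jk)).
  rewrite /add_min minjk; exists (x |: C); split=> //.
  apply: lex_inv_extend inv (subsetU1 x C) (setU1_in_M xm sCM) _ _.
    exact: trace_nonempty_mono (subsetU1 x C) trj.
  move=> v vj; case: (eqVneq v k) => [-> | vk].
    by move=> eqkj; apply: (symdiff_separates xjk) (esym eqkj).
  apply: trace_neq_mono (subsetU1 x C) _; rewrite -trkj.
  exact: sep v k vj kj (elimN eqP vk).
(* case (iii): the trace of j differs from all earlier traces *)
exists C; split=> //; apply: lex_inv_extend inv (subxx _) sCM trj _.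
move=> v vj eqvj; move/negP: (nok v); rewrite vj eqvj eqxx /=; apply.
apply/forallP=> k; apply/implyP=> /andP[kj /eqP eqkj].
case: (eqVneq k v) => [-> // | kv].
by case: (sep k v kj vj (elimN eqP kv)); rewrite eqvj eqkj.
Qed.

Lemma lex_prefix_inv (i : nat) : (i <= n)%N -> exists C,
  foldl (fun oC j => if oC is Some C then lex_step e C j else None)
    (Some set0) (take i (enum 'I_n)) = Some C /\ lex_inv i C.
Proof.
elim: i => [_ | i IH lt_in].
  by exists set0; rewrite take0; do !split=> //; exact: sub0set.
have [C [runC invC]] := IH (ltnW lt_in).
pose j : 'I_n := Ordinal lt_in.
rewrite (take_nth j) ?size_enum_ord // foldl_rcons runC (nth_ord_enum j j).
exact: (@lex_step_inv j C invC).
Qed.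

End LexAlgorithm.

Theorem proposition2 (n : nat) (e : rel 'I_n) (m : nat) :
  simple_graph e -> twin_free e ->
  (1 <= m)%N -> (m <= n)%N ->
  identifying_code e [set i : 'I_n | (i < m)%N] ->
  exists C : {set 'I_n},
    lex_algorithm e = Some C /\ identifying_code e C /\
    C \subset [set i : 'I_n | (i < m)%N].
Proof.
move=> _ twinfree _ _ codeM.
have [C [runC [sCM [dom sep]]]] := lex_prefix_inv twinfree codeM (leqnn n).
rewrite take_oversize ?size_enum_ord // in runC.
exists C; do !split=> //.
- by move=> v; exact: dom.
- by move=> v w; exact: sep.
Qed.
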